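(* Define $C_1(h)=\binom{4h+2}{h}$, $C_2(h)=\frac{2h+1}{4h+1}\binom{4h+1}{h}$, $C_3(h)=\frac12\binom{4h}{h}$, $C_4(h)=\binom{4h+1}{h}$ (equivalently $C_1(h)=\tfrac12C(2h+1,h+1)$, $C_2(h)=\tfrac12C(2h,h+1)$, $C_3(h)=\tfrac12C(2h,h)$, $C_4(h)=\tfrac12C(2h+1,h)$). Then for any positive integer $h$, \[\sum_{j=0}^hC_3(j)C_3(h-j)=2\sum_{j=0}^{h-1}C_2(j)C_1(h-1-j),\] \[\sum_{j=0}^hC_3(j)C_4(h-j)=\sum_{j=0}^hC_2(j)C_3(h-j)+\sum_{j=0}^{h-1}C_1(j)C_1(h-1-j),\] \[\sum_{j=0}^hC_4(j)C_4(h-j)=2\sum_{j=0}^hC_3(j)C_1(h-j).\]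
   Context: $C(p,q)=\frac{(2p)!(2q)!}{p!(p+q)!q!}$. *)

(* values of C_1..C_4 are rationals (C_3(0) = 1/2). *)
From mathcomp Require Import all_boot all_order all_algebra.
Set Implicit Arguments. Unset Strict Implicit. Unset Printing Implicit Defensive.
Import Order.TTheory GRing.Theory Num.Theory.
Local Open Scope ring_scope.

Definition C1 (h : nat) : rat := ('C(4 * h + 2, h))%:R.
Definition C2 (h : nat) : rat :=
  ((2 * h + 1)%:R / (4 * h + 1)%:R) * ('C(4 * h + 1, h))%:R.
Definition C3 (h : nat) : rat := 2%:R^-1 * ('C(4 * h, h))%:R.
Definition C4 (h : nat) : rat := ('C(4 * h + 1, h))%:R.

(* Let A_r(n) = binom(tn+r, n) and let P_r(n) = r/(tn+r) binom(tn+r, n) be the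
   Raney numbers.  These are the coefficients of B^r/(1 - t + t/B) and of B^r,
   for B = B_t the generalized binomial series (Concrete Mathematics, 5.4), so
   A_r * P_s = A_(r+s) for the Cauchy product *.  As P_(s+1) = t A_s - (t-1) A_(s+1),
   this yields t (A_r * A_s) - (t-1) (A_r * A_(s+1)) = A_(r+s+1); hence for t > 1
   the product A_r * A_s depends only on r + s.  For t = 4 we have C_1 = A_2,
   C_3 = A_0/2, C_4 = A_1 and C_2 = 2 A_0 - A_1, and the three identities become
   linear relations between the A_0 * A_m, which follow from that recurrence and
   Pascal's rule. *)

From mathcomp Require Import all_boot all_order all_algebra.
From mathcomp Require Import zify ring lra.
Import GRing.Theory Num.Theory.
Local Open Scope ring_scope.

Section Convolution.

Context {R : comNzRingType}.
Implicit Types u v : nat -> R.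

Definition conv u v n : R := \sum_(0 <= k < n.+1) u k * v (n - k)%N.

Lemma eq_conv {u u' v v'} : u =1 u' -> v =1 v' -> conv u v =1 conv u' v'.
Proof. by move=> eu ev n; apply: eq_bigr => k _; rewrite eu ev. Qed.

Lemma convC u v n : conv u v n = conv v u n.
Proof.
rewrite /conv big_nat_rev; apply: eq_big_nat => k /andP[_ lt_kn].
by rewrite add0n subSS subKn 1?mulrC // -ltnS.
Qed.

Lemma convZl a u v n : conv (fun k => a * u k) v n = a * conv u v n.
Proof. by rewrite /conv mulr_sumr; apply: eq_bigr => k _; rewrite mulrA. Qed.

Lemma convZr a u v n : conv u (fun k => a * v k) n = a * conv u v n.
Proof. by rewrite convC convZl convC. Qed.

Lemma convBl u u' v n :
  conv (fun k => u k - u' k) v n = conv u v n - conv u' v n.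
Proof. by rewrite /conv -sumrB; apply: eq_bigr => k _; rewrite mulrBl. Qed.

Lemma conv_recr u v v1 v2 n : v 0 = v1 0 -> (forall k, v k.+1 = v1 k.+1 + v2 k) ->
  conv u v n.+1 = conv u v1 n.+1 + conv u v2 n.
Proof.
move=> v0 vS; rewrite /conv !(big_nat_recr n.+1) //= !subnn v0 addrAC -big_split /=.
congr (_ + _); apply: eq_big_nat => k /andP[_ lt_kn].
by rewrite subSn // vS mulrDr.
Qed.

End Convolution.

Section GeneralizedBinomial.

Variable t : nat.

Definition gbin (r n : nat) : rat := 'C(t * n + r, n)%:R.

(* The Raney number r/(tn+r) binom(tn+r, n), written without division so that
   [raney 0 0 = 1]. *)
Definition raney (r n : nat) : rat :=
  if n is m.+1 then gbin r n - t%:R * gbin (r + t.-1) m else 1.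

Lemma gbin0 r : gbin r 0 = 1.
Proof. by rewrite /gbin muln0 add0n bin0. Qed.

Lemma gbinS r n : gbin r.+1 n.+1 = gbin r n.+1 + gbin (r + t) n.
Proof. by rewrite /gbin addnS binS natrD (addnC r) addnA -mulnSr. Qed.

Lemma gbin0S n : gbin 0 n.+1 = t%:R * gbin t.-1 n.
Proof.
rewrite /gbin; case: t => [|t']; first by rewrite mul0n bin_small // mul0r.
apply: (mulfI (x := n.+1%:R)); first by rewrite pnatr_eq0.
rewrite addn0 mulrCA -!natrM -mul_bin_diag mulnA.
by have -> : (t'.+1 * n.+1).-1 = (t'.+1 * n + t')%N by lia.
Qed.

Lemma raney0S n : raney 0 n.+1 = 0.
Proof. by rewrite /raney gbin0S subrr. Qed.

Lemma raneyS r n : raney r.+1 n.+1 = raney r n.+1 + raney (r + t) n.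
Proof.
case: n => [|n]; rewrite /raney.
  by rewrite gbinS !gbin0; ring.
by rewrite addSn !gbinS [(r + t.-1 + t)%N]addnAC; ring.
Qed.

Lemma raney_gbin r n : (0 < t)%N ->
  t%:R * gbin r n - (t%:R - 1) * gbin r.+1 n = raney r.+1 n.
Proof.
move=> t_gt0; case: n => [|n]; first by rewrite /raney !gbin0; ring.
by rewrite /raney addSn -addnS prednK // gbinS; ring.
Qed.

Lemma conv_gbin_raney r s n : conv (gbin r) (raney s) n = gbin (r + s) n.
Proof.
elim: n s => [|n IHn] s; first by rewrite /conv big_nat1 !gbin0 mul1r.
elim: s => [|s IHs].
  rewrite /conv big_nat_recr //= subnn mulr1 addn0 big_nat big1 ?add0r //.
  by move=> k /andP[_ lt_kn]; rewrite subSn // raney0S mulr0.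
rewrite (@conv_recr _ _ _ (raney s) (raney (s + t))) //.
  by rewrite IHs IHn addnS gbinS addnA.
exact: raneyS.
Qed.

Lemma conv_gbinS r s n :
  conv (gbin r) (gbin s.+1) n.+1
  = conv (gbin r) (gbin s) n.+1 + conv (gbin r) (gbin (s + t)) n.
Proof. by apply: conv_recr; [rewrite !gbin0 | exact: gbinS]. Qed.

Lemma conv_gbin_rec r s n : (0 < t)%N ->
  t%:R * conv (gbin r) (gbin s) n - (t%:R - 1) * conv (gbin r) (gbin s.+1) n
  = gbin (r + s.+1) n.
Proof.
move=> t_gt0.
have -> : gbin (r + s.+1) n
    = conv (gbin r) (fun k => t%:R * gbin s k - (t%:R - 1) * gbin s.+1 k) n.
  by rewrite -conv_gbin_raney; apply: eq_conv => // k; rewrite raney_gbin.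
by rewrite [RHS]convC convBl !convZl !(convC (gbin r)).
Qed.

Lemma conv_gbin_shift r s n : (1 < t)%N ->
  conv (gbin r.+1) (gbin s) n = conv (gbin r) (gbin s.+1) n.
Proof.
(* Both orders of [conv_gbin_rec] have the same right-hand side; cancel t - 1. *)
move=> t_gt1; have t_gt0 : (0 < t)%N by apply: ltnW.
have := conv_gbin_rec s r n t_gt0.
rewrite addnS -addSn addnC -(conv_gbin_rec r s n t_gt0).
rewrite [conv (gbin s) _ _]convC [conv (gbin s) _ _]convC => /addrI /oppr_inj.
apply: mulfI; rewrite subr_eq0 pnatr_eq1; lia.
Qed.

Lemma conv_gbinE r s n : (1 < t)%N ->
  conv (gbin r) (gbin s) n = conv (gbin 0) (gbin (r + s)) n.
Proof.
by move=> t_gt1; elim: r s => [|r IHr] s //; rewrite conv_gbin_shift // IHr addnS.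
Qed.

End GeneralizedBinomial.

Lemma C2E : C2 =1 fun h => 2%:R * gbin 4 0 h - gbin 4 1 h.
Proof.
move=> h; rewrite /C2 /gbin addn0.
have nz : (4 * h + 1)%:R != 0 :> rat by rewrite pnatr_eq0 addn1.
have e : (4 * h + 1)%:R * 'C(4 * h, h)%:R = (3 * h + 1)%:R * 'C(4 * h + 1, h)%:R :> rat.
  have := mul_bin_down (4 * h).+1 h; rewrite /= -addn1.
  have -> : (4 * h + 1 - h = 3 * h + 1)%N by lia.
  by rewrite -!natrM => ->.
apply: (mulfI nz); rewrite mulrA mulrCA mulfV // mulr1 mulrBr [in RHS]mulrCA e.
ring.
Qed.

Lemma C3E : C3 =1 fun h => 2%:R^-1 * gbin 4 0 h.
Proof. by move=> h; rewrite /C3 /gbin addn0. Qed.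

Lemma conv_C3C3 n : conv C3 C3 n.+1 = 2%:R * conv C2 C1 n.
Proof.
rewrite (eq_conv C3E C3E) convZl convZr (eq_conv C2E (frefl C1)) convBl convZl.
rewrite -[C1]/(gbin 4 2) (conv_gbinE 4 1 2 n) // add1n.
(* With F m := conv (gbin 4 0) (gbin 4 m), the goal is F 0 n.+1 = 16 F 2 n - 8 F 3 n. *)
have := conv_gbin_rec 4 0 0 n.+1 isT; have := conv_gbinS 4 0 0 n.
have := conv_gbin_rec 4 0 2 n isT; have := conv_gbin_rec 4 0 3 n isT.
have := gbinS 4 0 n; have := gbin0S 4 n.
rewrite !add0n; lra.
Qed.

Lemma conv_C3C4 n : conv C3 C4 n.+1 = conv C2 C3 n.+1 + conv C1 C1 n.
Proof.
rewrite (eq_conv C3E (frefl C4)) (eq_conv C2E C3E) convZl convZr convBl convZl.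
rewrite -[C4]/(gbin 4 1) -[C1]/(gbin 4 2) (conv_gbinE 4 1 0) // (conv_gbinE 4 2 2) //.
by rewrite conv_gbinS !add0n; field.
Qed.

Lemma conv_C4C4 n : conv C4 C4 n = 2%:R * conv C3 C1 n.
Proof.
rewrite (eq_conv C3E (frefl C1)) convZl mulrA mulfV ?pnatr_eq0 // mul1r.
exact: (conv_gbinE 4 1 1).
Qed.

Theorem corollary6p2 (h : nat) : (0 < h)%N ->
  [/\ \sum_(0 <= j < h.+1) C3 j * C3 (h - j)
        = 2%:R * \sum_(0 <= j < h) C2 j * C1 (h - 1 - j),
      \sum_(0 <= j < h.+1) C3 j * C4 (h - j)
        = \sum_(0 <= j < h.+1) C2 j * C3 (h - j)
          + \sum_(0 <= j < h) C1 j * C1 (h - 1 - j)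
    & \sum_(0 <= j < h.+1) C4 j * C4 (h - j)
        = 2%:R * \sum_(0 <= j < h.+1) C3 j * C1 (h - j)].
Proof.
case: h => // n _; rewrite subn1.
split; [exact: conv_C3C3 | exact: conv_C3C4 | exact: conv_C4C4].
Qed.
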